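(* Let $P\in\{0,1\}^{k\times\ell}$ be a pattern with two rows $r_1<r_2$ and two columns $c_1<c_2$ of one of the following two types: Type 1: $\mathrm{supp}(P)\subseteq([r_1,r_2]\times\{c_1\})\cup\big(\{r_1,r_2\}\times([c_1]\cup\{c_2\})\big)$; Type 2: $\mathrm{supp}(P)\subseteq([r_1,r_2]\times\{c_1\})\cup\big(\{r_2\}\times([c_1]\cup\{c_2\})\big)\cup([r_1]\times\{c_2\})$. If $e=(r_1,c_1)$ is a 1-entry of $P$, then $e$ is row-bounding.
   Context: All matrices are binary; rows numbered top to bottom, columns left to right; $(i,j)$ is the entry in row $i$, column $j$; $\mathrm{supp}$ is the set of 1-entries; $[a,b]=\{a,\dots,b\}$, $[n]=[1,n]$. $M\Delta f$ is $M$ with the value of entry $f$ switched. An embedding of $P\in\{0,1\}^{k\times\ell}$ into $M\in\{0,1\}^{m\times n}$ is a map $\phi:[k]\times[\ell]\to[m]\times[n]$ sending 1-entries to 1-entries such that if $e_1=(i_1,j_1)$, $e_2=(i_2,j_2)$ map to $(i_1^*,j_1^* )$, $(i_2^*,j_2^* )$, then $i_1<i_2\Rightarrow i_1^*<i_2^*$ and $j_1<j_2\Rightarrow j_1^*<j_2^*$. $M$ avoids $P$ if no embedding exists; $\mathrm{Av}(P)$ is the set of $P$-avoiding matrices. For a 1-entry $e$ of $P$ and $M\in\mathrm{Av}(P)$, a 0-entry $f$ of $M$ is critical for $e$ if some embedding of $P$ into $M\Delta f$ maps $e$ to $f$; a horizontal 0-run (maximal run of consecutive 0-entries in a row) is critical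 for $e$ if it contains a 0-entry critical for $e$. $e$ is row-bounding if there is a constant $K$ such that for every $M\in\mathrm{Av}(P)$ every row of $M$ contains at most $K$ horizontal 0-runs critical for $e$. *)

(* Binary matrices are 'M[bool]_(m, n); indices are 0-based
   ('I_m), so the paper's row/column i corresponds to ordinal i-1. *)
From mathcomp Require Import all_boot all_order all_algebra.
Set Implicit Arguments. Unset Strict Implicit. Unset Printing Implicit Defensive.

Definition switch_entry (m n : nat) (M : 'M[bool]_(m, n)) (f : 'I_m * 'I_n)
  : 'M[bool]_(m, n) :=
  \matrix_(i, j) (if (i, j) == f then ~~ M i j else M i j).

Definition is_embedding (k l m n : nat) (P : 'M[bool]_(k, l)) (M : 'M[bool]_(m, n))
  (phi : 'I_k * 'I_l -> 'I_m * 'I_n) : Prop :=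
  (forall e : 'I_k * 'I_l, P e.1 e.2 -> M (phi e).1 (phi e).2) /\
  (forall e1 e2 : 'I_k * 'I_l,
      (e1.1 < e2.1)%N -> ((phi e1).1 < (phi e2).1)%N) /\
  (forall e1 e2 : 'I_k * 'I_l,
      (e1.2 < e2.2)%N -> ((phi e1).2 < (phi e2).2)%N).

Definition avoids (k l m n : nat) (P : 'M[bool]_(k, l)) (M : 'M[bool]_(m, n)) : Prop :=
  ~ exists phi, is_embedding P M phi.

Definition critical_entry (k l m n : nat) (P : 'M[bool]_(k, l)) (e : 'I_k * 'I_l)
  (M : 'M[bool]_(m, n)) (f : 'I_m * 'I_n) : Prop :=
  M f.1 f.2 = false /\
  exists phi, is_embedding P (switch_entry M f) phi /\ phi e = f.

Definition hzero_run (m n : nat) (M : 'M[bool]_(m, n)) (i : 'I_m) (a b : 'I_n) : Prop :=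
  (a <= b)%N /\
  (forall j : 'I_n, (a <= j <= b)%N -> M i j = false) /\
  (forall j : 'I_n, j.+1 = a -> M i j = true) /\
  (forall j : 'I_n, j = b.+1 :> nat -> M i j = true).

Definition critical_run (k l m n : nat) (P : 'M[bool]_(k, l)) (e : 'I_k * 'I_l)
  (M : 'M[bool]_(m, n)) (i : 'I_m) (a b : 'I_n) : Prop :=
  hzero_run M i a b /\
  exists j : 'I_n, (a <= j <= b)%N /\ critical_entry P e M (i, j).

(* e is row-bounding for P: a uniform bound K on the number of horizontal
   0-runs critical for e in any row of any P-avoiding matrix.  Runs are
   identified by their pair of endpoints (a, b). *)
Definition row_bounding (k l : nat) (P : 'M[bool]_(k, l)) (e : 'I_k * 'I_l) : Prop :=
  exists K : nat, forall (m n : nat) (M : 'M[bool]_(m, n)), avoids P M ->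
    forall (i : 'I_m) (R : seq ('I_n * 'I_n)), uniq R ->
      (forall ab, ab \in R -> critical_run P e M i ab.1 ab.2) ->
      (size R <= K)%N.

(* Type 1 and Type 2 support conditions (0-based: paper's [c1] = {0..c1}). *)
Definition pattern_type1 (k l : nat) (P : 'M[bool]_(k, l)) (r1 r2 : 'I_k) (c1 c2 : 'I_l)
  : Prop :=
  forall (i : 'I_k) (j : 'I_l), P i j ->
    ((r1 <= i <= r2)%N /\ j = c1) \/
    ((i = r1 \/ i = r2) /\ ((j <= c1)%N \/ j = c2)).

Definition pattern_type2 (k l : nat) (P : 'M[bool]_(k, l)) (r1 r2 : 'I_k) (c1 c2 : 'I_l)
  : Prop :=
  forall (i : 'I_k) (j : 'I_l), P i j ->
    ((r1 <= i <= r2)%N /\ j = c1) \/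
    (i = r2 /\ ((j <= c1)%N \/ j = c2)) \/
    ((i <= r1)%N /\ j = c2).

From mathcomp Require Import all_boot all_order all_algebra zify.
From Stdlib Require Import IndefiniteDescription.
Set Implicit Arguments. Unset Strict Implicit. Unset Printing Implicit Defensive.

(* In a row i of a P-avoiding matrix M, choose in each critical 0-run a critical 0-entry j_s
   and an embedding phi_s of P into M with (i, j_s) switched that sends e to (i, j_s);
   consecutive choices are separated by 1-entries g_s of row i.  Since e cannot be moved onto a
   1-entry of row i, phi_s maps the column of e strictly between the 1-entries of row i around
   j_s.  To embed P into M it suffices to send every 1-entry of P to a 1-entry of M in its cell
   of a grid of increasing row and column thresholds; gluing thresholds from the row and column
   hulls of two critical embeddings phi_s, phi_t and sending e to a gap 1-entry g_u gives such
   an embedding as soon as the hulls of row r2 - 1 are suitably ordered.  For Type 2 one of the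
   two orders between phi_0 and phi_(c2-c1+1) works; for Type 1 a pigeonhole over c1 + 1 blocks
   of c2 - c1 + 1 consecutive runs finds a working pair.  Hence a row has at most
   (c1 + 1)(c2 - c1 + 1) + 1 critical runs. *)

(** * Embeddings from threshold grids *)

Definition window (e : nat -> nat) (a v : nat) : bool :=
  ((a == 0) || (e a.-1 < v)) && (v <= e a).

Lemma windowI (e : nat -> nat) a v :
  (0 < a -> e a.-1 < v) -> v <= e a -> window e a v.
Proof. by move=> lo hi; rewrite /window hi andbT; case: a lo {hi} => //= a; apply. Qed.

Definition increasing_on (p K : nat) (e : nat -> nat) :=
  forall a, p <= a -> a.+1 < K -> e a < e a.+1.

Lemma increasing_on_lt p K e a b :
  increasing_on p K e -> p <= a -> a < b -> b < K -> e a < e b.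
Proof.
move=> incr pa; elim: b => // b IH; rewrite ltnS leq_eqVlt => /predU1P[<- | ab] bK.
  exact: incr pa bK.
exact: ltn_trans (IH ab (ltnW bK)) (incr _ (leq_trans pa (ltnW ab)) bK).
Qed.

Lemma increasing_on_sub p K p' K' e :
  p <= p' -> K' <= K -> increasing_on p K e -> increasing_on p' K' e.
Proof. by move=> pp' K'K incr a p'a aK'; apply: incr; lia. Qed.

Definition thresholds (K N : nat) (e : nat -> nat) := increasing_on 0 K e /\ e K.-1 < N.

Lemma thresholds_lt K N e a : thresholds K N e -> a < K -> e a < N.
Proof.
move=> [incr last] aK; apply: leq_ltn_trans last.
case: (ltngtP a K.-1) => [lt | gt | -> //]; last lia.
by apply/ltnW/(increasing_on_lt incr) => //; lia.
Qed.

Lemma window_lt K N e a b v w :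
  thresholds K N e -> a < b -> b < K -> window e a v -> window e b w -> v < w.
Proof.
move=> [incr _] ab bK /andP[_ va] /andP[wb _]; move: wb.
rewrite eqn0Ngt (leq_ltn_trans _ ab) //=; apply: leq_ltn_trans.
case: (ltngtP a b.-1) => [lt | gt | <- //]; last lia.
by apply/(leq_trans va)/ltnW/(increasing_on_lt incr) => //; lia.
Qed.

Lemma embedding_of_windows (k l m n : nat) (P : 'M[bool]_(k, l)) (M : 'M[bool]_(m, n))
    (er ec : nat -> nat) :
  thresholds k m er -> thresholds l n ec ->
  (forall x : 'I_k * 'I_l, P x.1 x.2 ->
     exists w : 'I_m * 'I_n, [&& M w.1 w.2, window er x.1 w.1 & window ec x.2 w.2]) ->
  exists phi, is_embedding P M phi.
Proof.
move=> er_ok ec_ok images.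
pose fits (x : 'I_k * 'I_l) (w : 'I_m * 'I_n) := window er x.1 w.1 && window ec x.2 w.2.
pose w0 (x : 'I_k * 'I_l) : 'I_m * 'I_n :=
  (Ordinal (thresholds_lt er_ok (ltn_ord x.1)), Ordinal (thresholds_lt ec_ok (ltn_ord x.2))).
have fits_w0 x : fits x (w0 x).
  have [[er_incr _] [ec_incr _]] := (er_ok, ec_ok).
  apply/andP; split; apply: windowI => //= pos.
  - by have := er_incr x.1.-1; rewrite prednK //; apply.
  - by have := ec_incr x.2.-1; rewrite prednK //; apply.
pose phi x := odflt (w0 x) [pick w | M w.1 w.2 && fits x w].
have phi_fits x : fits x (phi x) by rewrite /phi; case: pickP => [w /andP[]|].
exists phi; split; [|split].
- move=> x Px; rewrite /phi; case: pickP => [w /andP[] //|none].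
  by have [w /and3P[Mw w1 w2]] := images x Px; have := none w; rewrite Mw /fits w1 w2.
- move=> x y xy; have /andP[x1 _] := phi_fits x; have /andP[y1 _] := phi_fits y.
  exact: window_lt er_ok xy (ltn_ord _) x1 y1.
- move=> x y xy; have /andP[_ x2] := phi_fits x; have /andP[_ y2] := phi_fits y.
  exact: window_lt ec_ok xy (ltn_ord _) x2 y2.
Qed.

Definition glue (p : nat) (f g : nat -> nat) (a : nat) : nat := if a < p then f a else g a.

Lemma glue_lt p f g a : a < p -> glue p f g a = f a.
Proof. by rewrite /glue => ->. Qed.

Lemma glue_ge p f g a : p <= a -> glue p f g a = g a.
Proof. by rewrite /glue ltnNge => ->. Qed.

Lemma window_glue_lt p f g a v : a < p -> window (glue p f g) a v = window f a v.
Proof. by move=> ap; rewrite /window !glue_lt // (leq_ltn_trans (leq_pred a)). Qed.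

Lemma window_glue_gt p f g a v : p < a -> window (glue p f g) a v = window g a v.
Proof.
by move=> pa; rewrite /window !glue_ge ?(ltnW pa) //; rewrite -ltnS prednK ?(leq_trans _ pa).
Qed.

Lemma window_glue_at p f g v :
  (0 < p -> f p.-1 < v) -> v <= g p -> window (glue p f g) p v.
Proof.
move=> lo hi; apply: windowI; last by rewrite glue_ge.
by move=> p_gt0; rewrite glue_lt ?lo // prednK.
Qed.

Lemma increasing_glue q p K f g :
  increasing_on q p f -> increasing_on p K g -> (q < p -> p < K -> f p.-1 < g p) ->
  increasing_on q K (glue p f g).
Proof.
move=> f_incr g_incr junction a qa aK; rewrite /glue.
case: (ltngtP a.+1 p) => [a1p | pa1 | a1p]; first exact: f_incr.
  by apply: g_incr.
by move: junction; rewrite -a1p; apply; rewrite // -a1p.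
Qed.

(** * Hulls of monotone cell maps *)

Section Hull.
Variables (I : finType) (key val : I -> nat) (K N : nat).
Hypothesis key_lt : forall x, key x < K.
Hypothesis key_onto : forall a, a < K -> exists x, key x = a.
Hypothesis val_lt : forall x, val x < N.
Hypothesis val_mono : forall x y, key x < key y -> val x < val y.

Definition hull (a : nat) : nat := \max_(x | key x == a) val x.

Lemma hull_ge x : val x <= hull (key x).
Proof. exact: leq_bigmax_cond. Qed.

Lemma hull_attained a : a < K -> exists2 x, key x = a & hull a = val x.
Proof.
move=> aK; have [x0 kx0] := key_onto aK.
rewrite /hull (bigmax_eq_arg x0); last exact/eqP.
by case: arg_maxnP => [|x /eqP kx _]; [exact/eqP | exists x].
Qed.

Lemma hull_lt a x : a < key x -> hull a < val x.
Proof.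
move=> ax; have [y ky ->] := hull_attained (ltn_trans ax (key_lt x)).
by apply: val_mono; rewrite ky.
Qed.

Lemma hull_window x : window hull (key x) (val x).
Proof. by apply: windowI (hull_ge x) => pos; apply: hull_lt; rewrite prednK ?leqnn. Qed.

Lemma hull_increasing : increasing_on 0 K hull.
Proof. by move=> a _ aK; have [y ky ->] := hull_attained aK; apply: hull_lt; rewrite ky. Qed.

Lemma hull_room a : a < K -> hull a + K <= a + N.
Proof.
move=> aK; have [x kx ->] := hull_attained aK.
have climb d : a + d < K -> exists2 z, key z = a + d & val x + d <= val z.
  elim: d => [|d IH adK]; first by exists x; rewrite ?addn0.
  have [z kz xz] := IH ltac:(lia).
  have [z' kz'] := key_onto adK; exists z' => //.
  have := val_mono (x := z) (y := z'); rewrite kz kz' addnS ltnSn; lia.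
have [z _] := climb (K.-1 - a) ltac:(lia); have := val_lt z; lia.
Qed.

Lemma hull_thresholds : 0 < K -> thresholds K N hull.
Proof.
by move=> K_gt0; split; [exact: hull_increasing | have := @hull_room K.-1 ltac:(lia); lia].
Qed.

End Hull.

Lemma cell_eq (k l : nat) (x y : 'I_k * 'I_l) :
  x.1 = y.1 :> nat -> x.2 = y.2 :> nat -> x = y.
Proof. by case: x y => [a b] [a' b'] /= aa' bb'; congr pair; apply: val_inj. Qed.

Lemma cell_neq (k l : nat) (x y : 'I_k * 'I_l) :
  (x.1 != y.1 :> nat) || (x.2 != y.2 :> nat) -> x != y.
Proof. by apply: contraL => /eqP ->; rewrite !eqxx. Qed.

Section MonotoneCells.
Variables (k l m n : nat) (phi : 'I_k * 'I_l -> 'I_m * 'I_n) (x0 : 'I_k * 'I_l).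
Hypothesis row_mono : forall x y : 'I_k * 'I_l, x.1 < y.1 -> (phi x).1 < (phi y).1.
Hypothesis col_mono : forall x y : 'I_k * 'I_l, x.2 < y.2 -> (phi x).2 < (phi y).2.

Local Notation row_key := (fun x : 'I_k * 'I_l => (x.1 : nat)).
Local Notation col_key := (fun x : 'I_k * 'I_l => (x.2 : nat)).
Local Notation row_val := (fun x : 'I_k * 'I_l => ((phi x).1 : nat)).
Local Notation col_val := (fun x : 'I_k * 'I_l => ((phi x).2 : nat)).

Definition row_hull := hull row_key row_val.
Definition col_hull := hull col_key col_val.

Let row_onto a : a < k -> exists x : 'I_k * 'I_l, (x.1 : nat) = a.
Proof. by move=> ak; exists (Ordinal ak, x0.2). Qed.
Let col_onto b : b < l -> exists x : 'I_k * 'I_l, (x.2 : nat) = b.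
Proof. by move=> bl; exists (x0.1, Ordinal bl). Qed.
Let row_key_lt (x : 'I_k * 'I_l) : x.1 < k := ltn_ord x.1.
Let col_key_lt (x : 'I_k * 'I_l) : x.2 < l := ltn_ord x.2.
Let row_val_lt (x : 'I_k * 'I_l) : (phi x).1 < m := ltn_ord (phi x).1.
Let col_val_lt (x : 'I_k * 'I_l) : (phi x).2 < n := ltn_ord (phi x).2.

Lemma monotone_cells_injective : injective phi.
Proof.
have mono_eq (f : 'I_k * 'I_l -> nat) (g : 'I_m * 'I_n -> nat) x y :
    (forall x y, f x < f y -> g (phi x) < g (phi y)) -> phi x = phi y -> f x = f y.
  move=> mono xy; case: (ltngtP (f x) (f y)) => // lt.
  - by have := mono _ _ lt; rewrite xy ltnn.
  - by have := mono _ _ lt; rewrite xy ltnn.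
move=> [a b] [a' b'] xy; congr pair; apply: val_inj.
- exact: (mono_eq (fun x => x.1 : nat) (fun w => w.1 : nat)) xy.
- exact: (mono_eq (fun x => x.2 : nat) (fun w => w.2 : nat)) xy.
Qed.

Lemma row_hull_lt a (x : 'I_k * 'I_l) : a < x.1 -> row_hull a < (phi x).1.
Proof. exact: (@hull_lt _ row_key row_val _ row_key_lt row_onto row_mono). Qed.
Lemma col_hull_lt b (x : 'I_k * 'I_l) : b < x.2 -> col_hull b < (phi x).2.
Proof. exact: (@hull_lt _ col_key col_val _ col_key_lt col_onto col_mono). Qed.

Lemma row_hull_window (x : 'I_k * 'I_l) : window row_hull x.1 (phi x).1.
Proof. exact: (@hull_window _ row_key row_val _ row_key_lt row_onto row_mono). Qed.
Lemma col_hull_window (x : 'I_k * 'I_l) : window col_hull x.2 (phi x).2.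
Proof. exact: (@hull_window _ col_key col_val _ col_key_lt col_onto col_mono). Qed.

Lemma row_hull_thresholds : thresholds k m row_hull.
Proof.
exact: (@hull_thresholds _ row_key row_val _ _ row_key_lt row_onto row_val_lt row_mono
  (leq_ltn_trans (leq0n _) (ltn_ord x0.1))).
Qed.
Lemma col_hull_thresholds : thresholds l n col_hull.
Proof.
exact: (@hull_thresholds _ col_key col_val _ _ col_key_lt col_onto col_val_lt col_mono
  (leq_ltn_trans (leq0n _) (ltn_ord x0.2))).
Qed.

Lemma row_hull_room a : a < k -> row_hull a + k <= a + m.
Proof. exact: (@hull_room _ row_key row_val _ _ row_onto row_val_lt row_mono). Qed.

End MonotoneCells.

(** * Critical embeddings and critical chains *)

Section CriticalEmbedding.
Variables (k l m n : nat) (P : 'M[bool]_(k, l)) (M : 'M[bool]_(m, n)) (e : 'I_k * 'I_l).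

Definition critical_embedding (i : 'I_m) (j : 'I_n) (phi : 'I_k * 'I_l -> 'I_m * 'I_n) :=
  [/\ M i j = false, is_embedding P (switch_entry M (i, j)) phi & phi e = (i, j)].

Lemma critical_entryP i j :
  critical_entry P e M (i, j) <-> exists phi, critical_embedding i j phi.
Proof.
split=> [[Mij [phi [emb phie]]] | [phi [Mij emb phie]]]; first by exists phi.
by split=> //; exists phi.
Qed.

Hypotheses (Pe : P e.1 e.2) (avoid : avoids P M).
Variables (i : 'I_m) (j : 'I_n) (phi : 'I_k * 'I_l -> 'I_m * 'I_n).
Hypothesis crit : critical_embedding i j phi.

Lemma critical_row_mono (x y : 'I_k * 'I_l) : x.1 < y.1 -> (phi x).1 < (phi y).1.
Proof. by case: crit => _ [_ [mono _]] _; apply: mono. Qed.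

Lemma critical_col_mono (x y : 'I_k * 'I_l) : x.2 < y.2 -> (phi x).2 < (phi y).2.
Proof. by case: crit => _ [_ [_ mono]] _; apply: mono. Qed.

Lemma critical_image_e : phi e = (i, j).
Proof. by case: crit. Qed.

Lemma critical_image_one (x : 'I_k * 'I_l) : P x.1 x.2 -> x != e -> M (phi x).1 (phi x).2.
Proof.
case: crit => _ [ones _] phie Px xe; have := ones x Px.
rewrite /switch_entry mxE -surjective_pairing -phie.
by rewrite (inj_eq (monotone_cells_injective critical_row_mono critical_col_mono)) (negPf xe).
Qed.

(* Otherwise redirecting e to the 1-entry (i, y) would embed P into M itself. *)
Lemma critical_shift_blocked (y : 'I_n) : M i y ->
  (exists x : 'I_k * 'I_l, x.2 < e.2 /\ y <= (phi x).2) \/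
  (exists x : 'I_k * 'I_l, e.2 < x.2 /\ (phi x).2 <= y).
Proof.
move=> My.
case: (boolP [exists x : 'I_k * 'I_l, (x.2 < e.2) && (y <= (phi x).2)]).
  by move/existsP => [x /andP[]]; left; exists x.
move/existsPn => left_free.
case: (boolP [exists x : 'I_k * 'I_l, (e.2 < x.2) && ((phi x).2 <= y)]).
  by move/existsP => [x /andP[]]; right; exists x.
move/existsPn => right_free; case: avoid.
pose psi x := if x == e then (i, y) else phi x.
have psi_row x : (psi x).1 = (phi x).1.
  by rewrite /psi; case: eqP => // ->; rewrite critical_image_e.
exists psi; split; [|split].
- move=> x Px; rewrite /psi; case: eqP => [_ //|/eqP xe].
  exact: critical_image_one.
- by move=> x x' xx'; rewrite !psi_row; apply: critical_row_mono.
- move=> x x' xx'; rewrite /psi; case: eqP => [xe|_]; case: eqP => [x'e|_] /=.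
  + by move: xx'; rewrite xe x'e ltnn.
  + by move: (right_free x'); rewrite -xe xx' /= -ltnNge.
  + by move: (left_free x); rewrite -x'e xx' /= -ltnNge.
  + exact: critical_col_mono.
Qed.

Lemma critical_col_lt_right_one (g : 'I_n) (z : 'I_k * 'I_l) :
  M i g -> j < g -> z.2 = e.2 :> nat -> (phi z).2 < g.
Proof.
move=> Mg jg ze; have je : (phi e).2 = j :> nat by rewrite critical_image_e.
case: (critical_shift_blocked Mg) => [[x [xe gx]] | [x [e_x xg]]].
  by have := critical_col_mono xe; lia.
by have := critical_col_mono (x := z) (y := x); rewrite ze => /(_ e_x); lia.
Qed.

Lemma critical_col_gt_left_one (g : 'I_n) (z : 'I_k * 'I_l) :
  M i g -> g < j -> z.2 = e.2 :> nat -> g < (phi z).2.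
Proof.
move=> Mg gj ze; have je : (phi e).2 = j :> nat by rewrite critical_image_e.
case: (critical_shift_blocked Mg) => [[x [xe gx]] | [x [e_x xg]]].
  by have := critical_col_mono (x := x) (y := z); rewrite ze => /(_ xe); lia.
by have := critical_col_mono e_x; lia.
Qed.

End CriticalEmbedding.

Section ZeroRuns.
Variables (m n : nat) (M : 'M[bool]_(m, n)) (i : 'I_m).

Lemma hzero_run_start_le (a b a' b' : 'I_n) :
  hzero_run M i a b -> hzero_run M i a' b' -> a' <= b -> a' <= a.
Proof.
move=> [_ [zero _]] [_ [_ [left _]]] a'b; rewrite leqNgt; apply/negP => aa'.
have a'1 : a'.-1 < n by have := ltn_ord a'; lia.
have := left (Ordinal a'1) ltac:(rewrite /= prednK //; lia).
by rewrite zero //=; lia.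
Qed.

Lemma hzero_run_end_le (a b a' b' : 'I_n) :
  hzero_run M i a b -> hzero_run M i a' b' -> a' <= b.+1 -> b' <= b.
Proof.
move=> [_ [_ [_ right]]] [_ [zero' _]] a'b; rewrite leqNgt; apply/negP => bb'.
have b1 : b.+1 < n by have := ltn_ord b'; lia.
by have := right (Ordinal b1) erefl; rewrite zero' //=; lia.
Qed.

Lemma hzero_runs_gap (a b a' b' : 'I_n) :
  hzero_run M i a b -> hzero_run M i a' b' -> a <= a' -> (a, b) != (a', b') ->
  exists2 g : 'I_n, b < g < a' & M i g.
Proof.
move=> run run' aa' neq; case: (ltnP b a') => [ba' | a'b].
  have b1 : b.+1 < n by have := ltn_ord a'; lia.
  have [_ [_ [_ right]]] := run; exists (Ordinal b1); last exact: right.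
  have [a'b' _] := run'; have := hzero_run_end_le run run'; rewrite /= ltnSn /=; lia.
have a'a := hzero_run_start_le run run' a'b.
have b'b := hzero_run_end_le run run' (leqW a'b).
have bb' := hzero_run_end_le run' run ltac:(have [? _] := run'; lia).
by move: neq; rewrite xpair_eqE -!val_eqE /=; lia.
Qed.

Lemma sorted_hzero_runs_gap (S : seq ('I_n * 'I_n)) (d : 'I_n * 'I_n) s :
  sorted [rel x y : 'I_n * 'I_n | x.1 <= y.1] S -> uniq S ->
  (forall ab, ab \in S -> hzero_run M i ab.1 ab.2) -> s.+1 < size S ->
  exists2 g : 'I_n, (nth d S s).2 < g < (nth d S s.+1).1 & M i g.
Proof.
move=> sortS uniqS runs sS.
have sorted_le : (nth d S s).1 <= (nth d S s.+1).1.
  apply: (sorted_leq_nth (leT := [rel x y : 'I_n * 'I_n | x.1 <= y.1])) => //.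
  - by move=> x y z /=; apply: leq_trans.
  - by move=> x /=.
  - by rewrite inE ltnW.
have neq : nth d S s != nth d S s.+1 by rewrite nth_uniq ?(ltnW sS) // eqn_leq ltnn andbF.
exact: hzero_runs_gap (runs _ (mem_nth d (ltnW sS))) (runs _ (mem_nth d sS)) sorted_le neq.
Qed.

End ZeroRuns.

Section ChainOfRuns.
Variables (k l m n : nat) (P : 'M[bool]_(k, l)) (M : 'M[bool]_(m, n)).
Variables (e : 'I_k * 'I_l) (i : 'I_m).

Definition critical_chain (T : nat) (j g : nat -> 'I_n)
    (phi : nat -> 'I_k * 'I_l -> 'I_m * 'I_n) : Prop :=
  (forall s, s < T -> critical_embedding P M e i (j s) (phi s)) /\
  (forall s, s.+1 < T -> [/\ j s < g s, g s < j s.+1 & M i (g s)]).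

Lemma critical_chain_of_runs (R : seq ('I_n * 'I_n)) : 0 < size R -> uniq R ->
    (forall ab, ab \in R -> critical_run P e M i ab.1 ab.2) ->
  exists j g phi, critical_chain (size R) j g phi.
Proof.
case: R => // d R0 _; set R := d :: R0 => uniqR runs.
pose S := sort [rel x y : 'I_n * 'I_n | x.1 <= y.1] R.
have permS : perm_eq S R by rewrite perm_sort.
have sizeS : size S = size R by rewrite size_sort.
have inS s : s < size R -> nth d S s \in R by rewrite -(perm_mem permS) -sizeS; apply: mem_nth.
pose critical_in_run s (p : 'I_n * ('I_k * 'I_l -> 'I_m * 'I_n)) := s < size R ->
  (nth d S s).1 <= p.1 <= (nth d S s).2 /\ critical_embedding P M e i p.1 p.2.
have [p pP] : exists p, forall s, critical_in_run s (p s).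
  apply: functional_choice => s; rewrite /critical_in_run.
  case: (ltnP s (size R)) => sR; last by exists (d.1, fun _ => (i, d.1)).
  have [_ [j [jS /critical_entryP[phi cphi]]]] := runs _ (inS s sR).
  by exists (j, phi).
pose one_between_runs s (g : 'I_n) := s.+1 < size R ->
  (nth d S s).2 < g < (nth d S s.+1).1 /\ M i g.
have [g gP] : exists g, forall s, one_between_runs s (g s).
  apply: functional_choice => s; rewrite /one_between_runs.
  case: (ltnP s.+1 (size R)) => sR; last by exists d.1.
  have [||||g' gS Mg] := sorted_hzero_runs_gap (M := M) (i := i) (S := S) d (s := s).
  - by apply: sort_sorted => x y; apply: leq_total.
  - by rewrite (perm_uniq permS).
  - by move=> ab; rewrite (perm_mem permS) => /runs[].
  - by rewrite sizeS.
  - by exists g'.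
exists (fun s => (p s).1), g, (fun s => (p s).2); split=> [s sR | s sR].
  by have [_] := pP s sR.
have [/andP[_ js] _] := pP s (ltnW sR); have [/andP[js' _] _] := pP s.+1 sR.
have [/andP[gs gs'] Mg] := gP s sR.
by split=> //; [apply: leq_ltn_trans gs | apply: leq_trans js'].
Qed.

End ChainOfRuns.

(** * Splicing critical embeddings *)

Definition stair (d b : nat) : nat := b * d.+1 + 1.

Lemma stairS d b : stair d b.+1 = stair d b + d.+1.
Proof. by rewrite /stair mulSn; lia. Qed.

Lemma stair_lt d b b' : b < b' -> stair d b + d < stair d b'.
Proof. by move=> bb'; have := leq_mul2r d.+1 b.+1 b'; rewrite bb' orbT mulSn /stair; lia. Qed.

Lemma stair_gt0 d b : 0 < stair d b.
Proof. by rewrite /stair addn1. Qed.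

Section CriticalChain.
Variables (k l m n : nat) (P : 'M[bool]_(k, l)) (M : 'M[bool]_(m, n)).
Variables (e : 'I_k * 'I_l) (i : 'I_m).
Hypotheses (Pe : P e.1 e.2) (avoid : avoids P M).
Variables (T : nat) (j g : nat -> 'I_n) (phi : nat -> 'I_k * 'I_l -> 'I_m * 'I_n).
Hypothesis chain : critical_chain P M e i T j g phi.

Local Notation R s := (row_hull (phi s)).
Local Notation C s := (col_hull (phi s)).

Lemma chain_critical s : s < T -> critical_embedding P M e i (j s) (phi s).
Proof. by case: chain => crit _; apply: crit. Qed.

Lemma chain_gap s : s.+1 < T -> [/\ j s < g s, g s < j s.+1 & M i (g s)].
Proof. by case: chain => _ gap; apply: gap. Qed.

Lemma chain_image_e s : s < T -> phi s e = (i, j s).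
Proof. by move=> sT; apply: critical_image_e (chain_critical sT). Qed.

Lemma chain_image_one s (x : 'I_k * 'I_l) :
  s < T -> P x.1 x.2 -> x != e -> M (phi s x).1 (phi s x).2.
Proof. by move=> sT Px; apply: (critical_image_one (chain_critical sT) Px). Qed.

Lemma chain_row_window s (x : 'I_k * 'I_l) : s < T -> window (R s) x.1 (phi s x).1.
Proof. by move=> sT; apply: row_hull_window e (critical_row_mono (chain_critical sT)) x. Qed.

Lemma chain_col_window s (x : 'I_k * 'I_l) : s < T -> window (C s) x.2 (phi s x).2.
Proof. by move=> sT; apply: col_hull_window e (critical_col_mono (chain_critical sT)) x. Qed.

Lemma chain_row_lt s a (x : 'I_k * 'I_l) : s < T -> a < x.1 -> R s a < (phi s x).1.
Proof. by move=> sT ax; apply: (row_hull_lt e (critical_row_mono (chain_critical sT)) ax). Qed.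

Lemma chain_col_lt s b (x : 'I_k * 'I_l) : s < T -> b < x.2 -> C s b < (phi s x).2.
Proof. by move=> sT bx; apply: (col_hull_lt e (critical_col_mono (chain_critical sT)) bx). Qed.

Lemma chain_row_thresholds s : s < T -> thresholds k m (R s).
Proof. by move=> sT; apply: row_hull_thresholds e (critical_row_mono (chain_critical sT)). Qed.

Lemma chain_col_thresholds s : s < T -> thresholds l n (C s).
Proof. by move=> sT; apply: col_hull_thresholds e (critical_col_mono (chain_critical sT)). Qed.

Lemma chain_row_room s a : s < T -> a < k -> R s a + k <= a + m.
Proof. by move=> sT ak; apply: (row_hull_room e (critical_row_mono (chain_critical sT)) ak). Qed.

Lemma chain_col_hull_lt_j s : s < T -> 0 < e.2 -> C s e.2.-1 < j s.
Proof.
move=> sT c1_gt0; have := chain_col_lt (x := e) (b := e.2.-1) sT ltac:(lia).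
by rewrite chain_image_e.
Qed.

Lemma chain_j_le_col_hull s : s < T -> j s <= C s e.2.
Proof. by move=> sT; have /andP[_] := chain_col_window e sT; rewrite chain_image_e. Qed.

Lemma chain_gap_pred s : 0 < s -> s < T -> [/\ j s.-1 < g s.-1, g s.-1 < j s & M i (g s.-1)].
Proof. by move=> s_gt0 sT; have := @chain_gap s.-1; rewrite prednK //; apply. Qed.

Lemma chain_j_lt s t : s < t -> t < T -> j s < j t.
Proof.
move=> st tT; apply: (@increasing_on_lt 0 T (fun s => j s)) => // u _ uT.
by have [js gj _] := chain_gap uT; apply: ltn_trans gj.
Qed.

Lemma chain_gap_lt_j s t : s < t -> t < T -> g s < j t.
Proof.
move=> st tT; have [_ gj _] := chain_gap (leq_ltn_trans st tT).
case: (ltngtP s.+1 t) => [lt | gt | <- //]; last lia.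
exact/(ltn_trans gj)/chain_j_lt.
Qed.

Lemma chain_j_lt_gap s t : s <= t -> t.+1 < T -> j s < g t.
Proof.
move=> st tT; have [jg _ _] := chain_gap tT.
case: (ltngtP s t) => [lt | gt | -> //]; last lia.
by apply/(ltn_trans _ jg)/chain_j_lt; lia.
Qed.

Lemma chain_gap_shift s d : (s + d).+1 < T -> g s + d <= g (s + d).
Proof.
elim: d => [|d IH]; first by rewrite !addn0.
rewrite !addnS => sdT; have [jg _ _] := chain_gap sdT.
have := chain_gap_lt_j (ltnSn (s + d)) (ltnW sdT); have := IH (ltnW sdT); lia.
Qed.

Lemma chain_gap_le s u : s <= u -> u.+1 < T -> g s + (u - s) <= g u.
Proof. by move=> su uT; have := @chain_gap_shift s (u - s); rewrite subnKC //; apply. Qed.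

Lemma chain_row_le_bottom s (x : 'I_k * 'I_l) : s < T -> (phi s x).1 <= m - k + x.1.
Proof.
move=> sT; have /andP[_ hi] := chain_row_window x sT.
by have := chain_row_room sT (ltn_ord x.1); lia.
Qed.

Local Notation bottomed r s := (glue r (R s) (fun a => m - k + a)).

Lemma bottomed_thresholds s r : s < T -> r < k -> thresholds k m (bottomed r s).
Proof.
move=> sT rk; have [R_incr _] := chain_row_thresholds sT.
have k_le_m := chain_row_room sT (leq_ltn_trans (leq0n r) rk).
split; last by rewrite glue_ge; have := ltn_ord i; lia.
apply: increasing_glue; first exact: increasing_on_sub (leqnn 0) (ltnW rk) R_incr.
  by move=> a _ _; lia.
by move=> r_gt0 _; have := chain_row_room sT (leq_ltn_trans (leq_pred r) rk); lia.
Qed.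

Lemma bottomed_window s r (x : 'I_k * 'I_l) :
  s < T -> x.1 <= r -> window (bottomed r s) x.1 (phi s x).1.
Proof.
move=> sT; rewrite leq_eqVlt => /predU1P[<- | xr]; last first.
  by rewrite window_glue_lt // chain_row_window.
by apply: window_glue_at (chain_row_le_bottom x sT) => x_gt0; apply: chain_row_lt; lia.
Qed.

Section Rectangle.
Variables (r2 : 'I_k) (c2 : 'I_l).
Hypotheses (r12 : e.1 < r2) (c12 : e.2 < c2).

Local Notation D := (c2 - e.2).
Local Notation ramped s t := (glue e.2 (C s) (glue c2 (fun b => g s + (b - e.2)) (C t))).

Lemma ramped_thresholds s t :
  s.+1 < T -> t < T -> g s + D <= C t c2 -> thresholds l n (ramped s t).
Proof.
move=> sT tT gC; have [Cs_incr _] := chain_col_thresholds (ltnW sT).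
have [Ct_incr Ct_last] := chain_col_thresholds tT; have c2l := ltn_ord c2.
split; last by rewrite !glue_ge //; lia.
apply: increasing_glue; first exact: increasing_on_sub (leqnn 0) (ltnW (ltn_trans c12 c2l)) Cs_incr.
  apply: increasing_glue; first by move=> a ? ?; lia.
    exact: increasing_on_sub (leq0n _) (leqnn l) Ct_incr.
  by move=> _ _; lia.
move=> c1_gt0 _; rewrite glue_lt //= subnn addn0.
by have := chain_col_hull_lt_j (ltnW sT) c1_gt0; have [jg _ _] := chain_gap sT; lia.
Qed.

Lemma ramped_window_c1 s t v :
  (0 < e.2 -> C s e.2.-1 < v) -> v <= g s -> window (ramped s t) e.2 v.
Proof. by move=> lo hi; apply: window_glue_at; rewrite // glue_lt // subnn addn0. Qed.

Lemma ramped_window_c2 s t v :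
  g s + D.-1 < v -> v <= C t c2 -> window (ramped s t) c2 v.
Proof. by move=> lo hi; rewrite window_glue_gt // window_glue_at //= => _; lia. Qed.

Lemma bottomed_window_e s r : s < T -> e.1 <= r -> window (bottomed r s) e.1 i.
Proof. by move=> sT er; have := bottomed_window sT er; rewrite chain_image_e. Qed.

Local Notation w s := (phi s (r2, c2)).2.

Lemma chain_j_lt_corner s : s < T -> j s < w s.
Proof.
by move=> sT; have := critical_col_mono (chain_critical sT) (x := e) (y := (r2, c2)) c12;
  rewrite chain_image_e.
Qed.

Lemma chain_corner_le s : s < T -> w s <= C s c2.
Proof. by move=> sT; have /andP[_] := chain_col_window (r2, c2) sT. Qed.

Section Type1.

Local Notation step b := (stair D b).
Hypothesis type1 : pattern_type1 P e.1 r2 e.2 c2.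

Lemma type1_support (x : 'I_k * 'I_l) : P x.1 x.2 ->
  [/\ e.1 <= x.1 <= r2, x.2 <= e.2 \/ x.2 = c2 :> nat
    & [\/ x.2 = e.2 :> nat, x.1 = e.1 :> nat | x.1 = r2 :> nat]].
Proof.
move=> /type1[[xr ->] | [[-> | ->] xc]]; split=> //; try by [constructor | left].
- by rewrite leqnn ltnW.
- by case: xc => [|->]; [left | right].
- by rewrite leqnn andbT ltnW.
- by case: xc => [|->]; [left | right].
Qed.

(* 1-entries of P are mapped by phi s, except (r2, c2) by phi t and e, (r1, c2) to g s,
   g (s + D); the columns c1 .. c2 - 1 are squeezed into the gap right of g s. *)
Lemma type1_splice s t : s <= t -> t < T -> (s + D).+1 < T -> g (s + D) <= C t c2 ->
  (P r2 c2 -> R s r2.-1 < (phi t (r2, c2)).1 /\ g s + D <= w t) -> False.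
Proof.
move=> st tT sDT gC corner; have sT : s.+1 < T by lia.
have gsD := chain_gap_shift sDT; have [_ _ MgD] := chain_gap sDT.
have [js _ Mgs] := chain_gap sT; have sT' := ltnW sT.
apply: avoid; apply: (embedding_of_windows (bottomed_thresholds sT' (ltn_ord r2))
  (ramped_thresholds sT tT ltac:(lia))) => x Px.
have [/andP[r1x xr] xc arms] := type1_support Px.
case: (ltngtP x.2 e.2) => [left | right | col].
- exists (phi s x); rewrite chain_image_one ?bottomed_window ?window_glue_lt ?chain_col_window //.
  by apply: cell_neq; lia.
- case: (eqVneq (x.1 : nat) e.1) => [top | bottom].
    have -> : x = (e.1, c2) by apply: cell_eq => /=; lia.
    exists (i, g (s + D)); rewrite MgD /= (bottomed_window_e sT' (ltnW r12)).
    by apply: ramped_window_c2; lia.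
  have xE : x = (r2, c2) by apply: cell_eq => /=; case: arms; lia.
  move: Px; rewrite xE => Pc; have [up rt] := corner Pc.
  exists (phi t (r2, c2)); rewrite chain_image_one //=; last by apply: cell_neq => /=; lia.
  have col_ok : window (ramped s t) c2 (w t).
    by apply: ramped_window_c2; [lia | exact: chain_corner_le].
  by rewrite col_ok andbT; apply: window_glue_at (chain_row_le_bottom _ tT).
- case: (eqVneq (x.1 : nat) e.1) => [top | below].
    have -> : x = e by apply: cell_eq.
    exists (i, g s); rewrite Mgs /= (bottomed_window_e sT' (ltnW r12)).
    by apply: ramped_window_c1 => // /(chain_col_hull_lt_j sT'); lia.
  exists (phi s x); rewrite chain_image_one ?bottomed_window //=; last by apply: cell_neq; lia.
  rewrite col; apply: ramped_window_c1 => [c1_gt0|]; first by apply: chain_col_lt; lia.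
  exact/ltnW/(critical_col_lt_right_one Pe avoid (chain_critical sT') Mgs js col).
Qed.


(* Column b < c1 is supplied by the block of runs starting at stair D b: (r1, b) goes to the
   gap just before the block and (r2, b) to the image of (r2, c2) under phi (stair D b); rows
   above r2 and columns from c1 on follow phi t.  [narrow] and [high] say that type1_splice
   does not apply. *)
Section Staircase.
Hypotheses (Pc : P r2 c2) (tT : step e.2 < T).
Hypothesis narrow : forall s, s + D < step e.2 -> w s < g (s + D).
Hypothesis high : forall s, s + D < step e.2 -> (phi (step e.2) (r2, c2)).1 <= R s r2.-1.

Local Notation t := (step e.2).
Local Notation ec := (glue e.2 (fun b => w (step b)) (C t)).

Lemma staircase_le_t b : b <= e.2 -> step b <= t.
Proof. by rewrite leq_eqVlt => /predU1P[-> // | /(stair_lt D)]; lia. Qed.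

Lemma staircase_gap_below b : b < e.2 -> w (step b) < g (step b.+1).-1.
Proof.
by move=> bc; rewrite stairS addnS /=; apply: narrow; apply: (stair_lt D).
Qed.

Lemma staircase_gap_above b : b <= e.2 -> g (step b).-1 < j (step b).
Proof.
move=> bc; apply: chain_gap_lt_j; first by rewrite prednK ?stair_gt0.
exact: leq_ltn_trans (staircase_le_t bc) tT.
Qed.

Lemma staircase_thresholds : thresholds l n ec.
Proof.
have [Ct_incr Ct_last] := chain_col_thresholds tT; have c2l := ltn_ord c2.
split; last by rewrite glue_ge //; lia.
apply: increasing_glue.
- move=> b _ bc /=; have := staircase_gap_below (ltnW bc).
  have := staircase_gap_above (ltnW bc).
  have := chain_j_lt_corner (leq_ltn_trans (staircase_le_t (ltnW bc)) tT); lia.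
- exact: increasing_on_sub (leq0n _) (leqnn l) Ct_incr.
- move=> c1_gt0 _; have := @staircase_gap_below e.2.-1 ltac:(lia); rewrite prednK //.
  by have := staircase_gap_above (leqnn e.2); have := chain_j_le_col_hull tT; lia.
Qed.

Lemma staircase_window b v :
  b < e.2 -> g (step b).-1 <= v <= w (step b) -> window ec b v.
Proof.
move=> bc /andP[lo hi]; apply: windowI => [b_gt0 | ]; last by rewrite glue_lt.
have := @staircase_gap_below b.-1 ltac:(lia); rewrite prednK // glue_lt; lia.
Qed.

Lemma staircase_window_c1 v : g t.-1 <= v <= C t e.2 -> window ec e.2 v.
Proof.
move=> /andP[lo hi]; apply: window_glue_at => // c1_gt0.
by have := @staircase_gap_below e.2.-1 ltac:(lia); rewrite prednK //; lia.
Qed.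

Lemma staircase_images (x : 'I_k * 'I_l) : P x.1 x.2 ->
  exists v : 'I_m * 'I_n, [&& M v.1 v.2, window (bottomed r2 t) x.1 v.1 & window ec x.2 v.2].
Proof.
move=> Px; have [/andP[r1x xr] xc arms] := type1_support Px.
case: (ltngtP x.2 e.2) => [left | right | col].
- have sT := leq_ltn_trans (staircase_le_t (ltnW left)) tT.
  have [_ gj Mg] := chain_gap_pred (stair_gt0 _ _) sT; have js := chain_j_lt_corner sT.
  case: (eqVneq (x.1 : nat) e.1) => [top | not_top].
    exists (i, g (step x.2).-1); rewrite Mg /= top (bottomed_window_e tT (ltnW r12)) /=.
    by rewrite staircase_window // leqnn; lia.
  have -> : x = (r2, x.2) by apply: cell_eq => //=; case: arms; lia.
  have corner_ne : (r2, c2) != e by apply: cell_neq => /=; lia.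
  have col_ok : window ec x.2 (w (step x.2)) by rewrite staircase_window // leqnn andbT; lia.
  exists (phi (step x.2) (r2, c2)); rewrite chain_image_one //= col_ok andbT.
  apply: window_glue_at (chain_row_le_bottom _ sT) => _.
  have := high (stair_lt D left); have := chain_row_lt (x := (r2, c2)) (a := r2.-1) sT.
  by have := chain_row_lt (x := (r2, c2)) (a := r2.-1) tT => /=; lia.
- exists (phi t x); rewrite chain_image_one ?bottomed_window ?window_glue_gt ?chain_col_window //.
  by apply: cell_neq; lia.
- have [_ gjt Mgt] := chain_gap_pred (stair_gt0 _ _) tT.
  have jC := chain_j_le_col_hull tT.
  case: (eqVneq (x.1 : nat) e.1) => [top | below].
    have -> : x = e by apply: cell_eq.
    exists (i, g t.-1); rewrite Mgt /= (bottomed_window_e tT (ltnW r12)).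
    by rewrite staircase_window_c1 //; lia.
  have /andP[_ xC] := chain_col_window x tT; rewrite col in xC.
  exists (phi t x); rewrite chain_image_one ?bottomed_window //=; last by apply: cell_neq; lia.
  rewrite col staircase_window_c1 // xC andbT ltnW //.
  exact: (critical_col_gt_left_one Pe avoid (chain_critical tT) Mgt gjt col).
Qed.

Lemma type1_staircase : False.
Proof.
apply: avoid; apply: embedding_of_windows staircase_images.
  exact: bottomed_thresholds tT (ltn_ord r2).
exact: staircase_thresholds.
Qed.

End Staircase.

Lemma type1_bound : T <= stair D e.2.+1.
Proof.
rewrite leqNgt; apply/negP => TK; have := stairS D e.2; have := stair_gt0 D e.2.
move=> t_gt0 tS; have tT : stair D e.2 < T by lia.
case Pc: (P r2 c2); last first.
  apply: (@type1_splice 0 D.+1) => //; rewrite ?Pc //; try lia.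
  have [_ gj _] := chain_gap (s := D) ltac:(lia).
  have := chain_j_lt_corner (s := D.+1) ltac:(lia); have := chain_corner_le (s := D.+1) ltac:(lia).
  rewrite add0n; lia.
apply: (type1_staircase Pc tT) => s sD; have sT : s < T by lia.
- rewrite ltnNge; apply/negP => gw; apply: (@type1_splice s s) => //; try lia.
    by have := chain_corner_le sT; lia.
  by split; [apply: chain_row_lt => /=; lia | have := chain_gap_shift (s := s) (d := D); lia].
- rewrite leqNgt; apply/negP => Rw; apply: (@type1_splice s (stair D e.2)) => //; try lia.
    have := chain_gap_lt_j sD tT; have := chain_j_lt_corner tT; have := chain_corner_le tT; lia.
  have := chain_gap_lt_j sD tT; have := chain_j_lt_corner tT.
  by have := chain_gap_shift (s := s) (d := D); split=> //; lia.
Qed.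

End Type1.

Section Type2.
Hypothesis type2 : pattern_type2 P e.1 r2 e.2 c2.

Lemma type2_support (x : 'I_k * 'I_l) : P x.1 x.2 ->
  [/\ x.1 <= r2, x.2 < e.2 -> x.1 = r2 :> nat, x.2 = e.2 :> nat -> e.1 <= x.1
    & e.2 < x.2 -> x.2 = c2 :> nat /\ (x.1 <= e.1 \/ x.1 = r2 :> nat)].
Proof.
move=> /type2[[/andP[r1x xr] ->] | [[-> xc] | [xr1 ->]]]; split=> //; try lia.
by case: xc => [|->] c1x; [lia | split; last right].
Qed.

Local Notation split_cols s t := (glue e.2 (C s) (C t)).

Lemma split_thresholds s t : s < T -> t < T -> j s < C t e.2 -> thresholds l n (split_cols s t).
Proof.
move=> sT tT jC; have [Cs_incr _] := chain_col_thresholds sT.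
have [Ct_incr Ct_last] := chain_col_thresholds tT; have c1l := ltn_trans c12 (ltn_ord c2).
split; last by rewrite glue_ge //; lia.
apply: increasing_glue; first exact: increasing_on_sub (leqnn 0) (ltnW c1l) Cs_incr.
  exact: increasing_on_sub (leq0n _) (leqnn l) Ct_incr.
by move=> c1_gt0 _; have := chain_col_hull_lt_j sT c1_gt0; lia.
Qed.

(* Row r2 left of c1 follows phi s, everything else phi t, and e goes to g (t - 1). *)
Lemma type2_fall s t : s < t -> t < T -> R t r2.-1 <= R s r2.-1 -> False.
Proof.
move=> st tT RR; have sT := ltn_trans st tT.
have [jg gj Mg] := chain_gap_pred (leq_trans (ltn0Sn s) st) tT.
have jsg : j s < g t.-1 by apply: chain_j_lt_gap; rewrite ?prednK //; lia.
have jC := chain_j_le_col_hull tT; have Cs := chain_col_hull_lt_j sT.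
apply: avoid; apply: (embedding_of_windows (bottomed_thresholds tT (ltn_ord r2))
  (split_thresholds sT tT ltac:(lia))) => x Px.
have [xr left_arm col right_arm] := type2_support Px.
case: (ltngtP x.2 e.2) => [left | right | c1x].
- have col_ok : window (split_cols s t) x.2 (phi s x).2.
    by rewrite window_glue_lt ?chain_col_window.
  exists (phi s x); rewrite chain_image_one ?col_ok ?andbT //; last by apply: cell_neq; lia.
  have := chain_row_le_bottom x sT; have := chain_row_lt (x := x) (a := r2.-1) sT.
  rewrite /= (left_arm left) => lo hi.
  by apply: window_glue_at => // r2_gt0; have := lo ltac:(lia); lia.
- exists (phi t x); rewrite chain_image_one ?bottomed_window ?window_glue_gt ?chain_col_window //.
  by apply: cell_neq; lia.
case: (eqVneq (x.1 : nat) e.1) => [top | below].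
  have -> : x = e by apply: cell_eq.
  exists (i, g t.-1); rewrite Mg /= (bottomed_window_e tT (ltnW r12)).
  by apply: window_glue_at => [/Cs|]; lia.
have /andP[_ xC] := chain_col_window x tT.
exists (phi t x); rewrite chain_image_one ?bottomed_window //=; last by apply: cell_neq; lia.
rewrite c1x; apply: window_glue_at => [/Cs | ]; last by rewrite -c1x.
by have := critical_col_gt_left_one Pe avoid (chain_critical tT) Mg gj c1x; lia.
Qed.

(* 1-entries left of c2 are mapped by phi s and those in column c2 by phi t, except e and
   (r1, c2), which go to g s and g (t - 1); rows above r1 follow phi t. *)
Section Rise.
Variables (s t : nat).
Hypotheses (st : s + D < t) (tT : t < T) (RR : R s r2.-1 < R t r2.-1).

Local Notation er := (glue e.1 (R t) (bottomed r2 s)).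

Let sT : s < T. Proof. lia. Qed.
Let sDT : (s + D).+1 < T. Proof. lia. Qed.

Lemma rise_gap_le v : g (s + D) <= v -> g s + D.-1 < v.
Proof. by have := chain_gap_shift sDT; lia. Qed.

Lemma rise_row_thresholds : thresholds k m er.
Proof.
have [b_incr b_last] := bottomed_thresholds sT (ltn_ord r2).
have [Rt_incr _] := chain_row_thresholds tT; have r1k := ltn_trans r12 (ltn_ord r2).
split; last by rewrite glue_ge //; lia.
apply: increasing_glue; first exact: increasing_on_sub (leqnn 0) (ltnW r1k) Rt_incr.
  exact: increasing_on_sub (leq0n _) (leqnn k) b_incr.
move=> r1_gt0 _; rewrite glue_lt //; have /andP[_] := chain_row_window e sT.
have := chain_row_lt (x := e) (a := e.1.-1) tT ltac:(lia).
by rewrite !chain_image_e //=; lia.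
Qed.

Lemma rise_row_e : window er e.1 i.
Proof.
apply: window_glue_at => [r1_gt0 | ].
  by have := chain_row_lt (x := e) (a := e.1.-1) tT ltac:(lia); rewrite chain_image_e.
by rewrite glue_lt //; have /andP[_] := chain_row_window e sT; rewrite chain_image_e.
Qed.

Lemma rise_row_below (x : 'I_k * 'I_l) : e.1 < x.1 <= r2 -> window er x.1 (phi s x).1.
Proof. by move=> /andP[r1x xr]; rewrite window_glue_gt // bottomed_window. Qed.

Lemma rise_images_c2 (x : 'I_k * 'I_l) : P x.1 x.2 -> x.2 = c2 :> nat ->
  exists v : 'I_m * 'I_n, [&& M v.1 v.2, window er x.1 v.1 & window (ramped s t) x.2 v.2].
Proof.
move=> Px c2x; have [xr _ _ /(_ ltac:(lia))[_ x1]] := type2_support Px.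
have [_ gj Mg] := chain_gap_pred (leq_trans (ltn0Sn _) st) tT.
have gDt := chain_gap_lt_j st tT; have gDt' := chain_gap_le (s := s + D) (u := t.-1).
have jC := chain_j_le_col_hull tT; have Cx := chain_col_lt (x := x) (b := e.2) tT ltac:(lia).
have /andP[_ xC] := chain_col_window x tT; rewrite c2x in xC.
have colx : window (ramped s t) x.2 (phi t x).2.
  by rewrite c2x ramped_window_c2 //; apply: rise_gap_le; lia.
have nex : x != e by apply: cell_neq; lia.
case: (ltngtP x.1 e.1) => [above | below | top].
- by exists (phi t x); rewrite chain_image_one // window_glue_lt // chain_row_window // colx.
- exists (phi t x); rewrite chain_image_one // colx andbT (window_glue_gt _ _ _ below).
  have x2 : x.1 = r2 :> nat by lia.
  have := chain_row_le_bottom x tT; have := chain_row_lt (x := x) (a := r2.-1) tT.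
  by rewrite /= x2 => lo hi; apply: window_glue_at => // r2_gt0; have := lo ltac:(lia); lia.
- have -> : x = (e.1, c2) by apply: cell_eq.
  exists (i, g t.-1); rewrite Mg /= rise_row_e ramped_window_c2 //; last lia.
  by apply: rise_gap_le; lia.
Qed.

Lemma rise_images (x : 'I_k * 'I_l) : P x.1 x.2 ->
  exists v : 'I_m * 'I_n, [&& M v.1 v.2, window er x.1 v.1 & window (ramped s t) x.2 v.2].
Proof.
move=> Px; have [xr left_arm col right_arm] := type2_support Px.
have [js _ Mgs] := chain_gap (s := s) ltac:(lia).
have Cs := chain_col_hull_lt_j sT.
case: (ltngtP x.2 e.2) => [left | right | c1x].
- exists (phi s x); rewrite chain_image_one ?rise_row_below ?window_glue_lt ?chain_col_window //.
    by rewrite (left_arm left) r12 leqnn.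
  by apply: cell_neq; lia.
- exact: rise_images_c2 Px (right_arm right).1.
case: (eqVneq (x.1 : nat) e.1) => [top | below].
  have -> : x = e by apply: cell_eq.
  by exists (i, g s); rewrite Mgs /= rise_row_e ramped_window_c1 // => /Cs; lia.
exists (phi s x); rewrite chain_image_one ?rise_row_below //=; first last.
- by apply: cell_neq; lia.
- by have := col c1x; rewrite xr andbT; lia.
rewrite c1x ramped_window_c1 // => [c1_gt0 |]; first by apply: chain_col_lt; lia.
exact/ltnW/(critical_col_lt_right_one Pe avoid (chain_critical sT) Mgs js c1x).
Qed.

Lemma type2_rise : False.
Proof.
have gD := chain_gap_shift sDT; have gDt := chain_gap_lt_j st tT.
have := chain_j_lt_corner tT; have := chain_corner_le tT => wC jw.
apply: avoid; apply: (embedding_of_windows rise_row_thresholds _ rise_images).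
by apply: ramped_thresholds; lia.
Qed.

End Rise.

Lemma type2_bound : T <= D.+2.
Proof.
rewrite leqNgt; apply/negP => TD.
case: (leqP (R D.+1 r2.-1) (R 0 r2.-1)) => [fall | rise].
  by apply: (@type2_fall 0 D.+1) => //; lia.
by apply: (@type2_rise 0 D.+1) => //; lia.
Qed.

End Type2.

End Rectangle.

End CriticalChain.

Theorem lemma3p12 (k l : nat) (P : 'M[bool]_(k, l)) (r1 r2 : 'I_k) (c1 c2 : 'I_l) :
  (r1 < r2)%N -> (c1 < c2)%N ->
  pattern_type1 P r1 r2 c1 c2 \/ pattern_type2 P r1 r2 c1 c2 ->
  P r1 c1 = true ->
  row_bounding P (r1, c1).
Proof.
move=> r12 c12 types Pe; exists (stair (c2 - c1) c1.+1) => m n M avoid i R uniqR runs.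
case: (posnP (size R)) => [-> // | R_gt0].
have [j [g [phi chain]]] := critical_chain_of_runs R_gt0 uniqR runs.
case: types => [type1 | type2].
  exact: (type1_bound (e := (r1, c1)) Pe avoid chain r12 c12 type1).
apply: leq_trans (type2_bound (e := (r1, c1)) Pe avoid chain r12 c12 type2) _.
by rewrite /= stairS; have := stair_gt0 (c2 - c1) c1; lia.
Qed.
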